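(* The greedy algorithm g-HHL is an $O(\sqrt n\log n)$-approximation algorithm for HL: on every input graph with $n$ vertices, the hub labeling it outputs has total size at most $O(\sqrt n\log n)$ times the minimum total size of a hub labeling of that graph.
   Context: Input: a directed graph $G=(V,E)$, $n=|V|$, with nonnegative arc lengths and no zero-length cycles; $\mathrm{dist}(u,w)$ is the shortest-path distance. A hub labeling (HL) assigns to each $v$ a forward label $L_f(v)\subseteq V$ and backward label $L_b(v)\subseteq V$ such that for every ordered pair $(u,w)$ with $w$ reachable from $u$, $L_f(u)\cap L_b(w)$ contains a vertex on some shortest $u$–$w$ path; its size is $\sum_v(|L_f(v)|+|L_b(v)|)$. (For undirected graphs $L_f=L_b=L$, pairs are unordered and the size is $\sum_v|L(v)|$.) g-HHL: start with empty labels; let $U$ be the set of uncovered pairs. For each not-yet-selected vertex $v$, the center graph $G_v$ is the bipartite graph with two copies $X,Y$ of $V$ and an arc $(u,w)$ for each $(u,w)\in U$ such that some shortest $u$–$w$ path contains $v$ (in the undirected case: the graph on $V$ with an edge, possibly a self-loop, $\{u,w\}$ for each uncovered unordered pair with a shortest path through $v$). In each iteration g-HHL selects a not-yet-selected vertex $v$ whose center graph has the maximum number of edges (ties arbitrary) and adds $v$ to $L_f(u)$ for each non-isolated $u\in X$ and to $L_b(w)$ for each non-isolated $w\in Y$ (undirected case: to $L(u)$ for each non-isolated $u$), until all pairs are covered. The output is a hierarchical labeling. *)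

From HB Require Import structures.
From mathcomp Require Import all_boot all_order all_algebra.
From mathcomp Require Import boolp reals exp.
Set Implicit Arguments. Unset Strict Implicit. Unset Printing Implicit Defensive.
Import Order.TTheory GRing.Theory Num.Theory.
Local Open Scope ring_scope.

Section HubLabeling.
Variables (R : realType) (V : finType) (E : rel V) (len : V -> V -> R).

(* A walk is x :: p with path E x p; it ends at last x p. *)
Definition walk_len (x : V) (p : seq V) : R :=
  \sum_(e <- zip (x :: p) p) len e.1 e.2.

Definition is_walk (u w : V) (p : seq V) : Prop := path E u p /\ last u p = w.

Definition reachable (u w : V) : Prop := exists p, is_walk u w p.

Definition shortest_walk (u w : V) (p : seq V) : Prop :=
  is_walk u w p /\ forall q, is_walk u w q -> walk_len u p <= walk_len u q.

Definition on_sp (u w v : V) : Prop :=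
  exists p, shortest_walk u w p /\ v \in u :: p.

Definition nonneg_lengths : Prop := forall x y, E x y -> 0 <= len x y.
Definition no_zero_cycles : Prop :=
  forall x p, path E x p -> last x p = x -> p != [::] -> 0 < walk_len x p.

(* A labeling: forward and backward labels *)
Definition labeling := ((V -> {set V}) * (V -> {set V}))%type.

Definition covered (L : labeling) (u w : V) : Prop :=
  exists v, v \in L.1 u :&: L.2 w /\ on_sp u w v.

Definition is_HL (L : labeling) : Prop :=
  forall u w, reachable u w -> covered L u w.

Definition HL_size (L : labeling) : nat :=
  \sum_(v : V) (#|L.1 v| + #|L.2 v|).

Definition empty_labeling : labeling := (fun _ => set0, fun _ => set0).

Definition uncovered (L : labeling) (u w : V) : Prop :=
  reachable u w /\ ~ covered L u w.

Definition all_covered (L : labeling) : Prop := forall u w, ~ uncovered L u w.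

(* arcs of the center graph G_v (pairs (u,w) in X x Y) *)
Definition center_edges (L : labeling) (v : V) : {set V * V} :=
  [set p : V * V | `[< uncovered L p.1 p.2 /\ on_sp p.1 p.2 v >] ].

Definition hhl_step (L : labeling) (v : V) : labeling :=
  (fun u => if [exists w, (u, w) \in center_edges L v] then v |: L.1 u else L.1 u,
   fun w => if [exists u, (u, w) \in center_edges L v] then v |: L.2 w else L.2 w).

(* greedy_run L S vs : starting from labels L with already selected set S,
   the sequence vs is a valid sequence of greedy choices of g-HHL, ending
   exactly when all pairs are covered (ties broken arbitrarily). *)
Fixpoint greedy_run (L : labeling) (S : {set V}) (vs : seq V) : Prop :=
  match vs with
  | [::] => all_covered L
  | v :: vs' =>
      ~ all_covered L /\ v \notin S /\
      (forall v', v' \notin S -> #|center_edges L v'| <= #|center_edges L v|)%N /\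
      greedy_run (hhl_step L v) (v |: S) vs'
  end.

Definition greedy_output (vs : seq V) : labeling := foldl hhl_step empty_labeling vs.

End HubLabeling.

From HB Require Import structures.
From mathcomp Require Import all_boot all_order all_algebra.
From mathcomp Require Import boolp reals exp.
From mathcomp Require Import ring lra zify.
Set Implicit Arguments. Unset Strict Implicit. Unset Printing Implicit Defensive.
Import Order.TTheory GRing.Theory Num.Theory.
Local Open Scope ring_scope.

(** Let [U] be the number of uncovered pairs and [Lopt] any
    hub labeling.  Every uncovered pair is covered in [Lopt] by a hub [x], hence is an
    edge of the center graph of [x] joining a forward holder of [x] to a backward
    holder of [x]; if all center graphs have at most [m] edges, AM-GM gives
    [2 U <= sqrt m * |Lopt|].  A greedy step on a center graph with [m] edges adds at
    most [2 min(n, m) <= 2 sqrt n sqrt m] labels and covers [m] pairs, so its cost is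
    at most [sqrt n * |Lopt| * m / U <= sqrt n * |Lopt| * (Phi U - Phi U')] with
    [Phi = ln + 1].  Telescoping, and [U <= n^2], bounds the output by
    [3 sqrt n ln n * |Lopt|]. *)

Section Potential.
Variable R : realType.

Lemma minn_le_sqrtrM (n m : nat) :
  ((minn n m)%:R : R) <= Num.sqrt n%:R * Num.sqrt m%:R.
Proof.
rewrite -sqrtrM ?ler0n // -natrM -[leLHS]ger0_norm ?ler0n // -sqrtr_sqr.
by rewrite ler_sqrt ?ler0n // -natrX ler_nat leq_mul ?geq_minl ?geq_minr.
Qed.

Lemma minn_mul_le_sqrt_addn (m a b : nat) :
  2 * ((minn m (a * b))%:R : R) <= Num.sqrt m%:R * (a + b)%:R.
Proof.
set s := Num.sqrt (m%:R : R).
have s_ge0 : 0 <= s := sqrtr_ge0 _.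
have ss : s * s = m%:R by rewrite -expr2 sqr_sqrtr.
have le_m : ((minn m (a * b))%:R : R) <= m%:R by rewrite ler_nat geq_minl.
have le_ab : ((minn m (a * b))%:R : R) <= a%:R * b%:R.
  by rewrite -natrM ler_nat geq_minr.
have a_ge0 : (0 : R) <= a%:R by rewrite ler0n.
have b_ge0 : (0 : R) <= b%:R by rewrite ler0n.
have amgm : a%:R * b%:R <= ((a%:R + b%:R) / 2) ^+ 2 :> R.
  have : 0 <= (a%:R - b%:R) ^+ 2 :> R by rewrite sqr_ge0.
  lra.
(* compare [s] with [(a + b) / 2]: below it use [min <= m = s^2], above it use AM-GM *)
rewrite natrD; have [|] := lerP s ((a%:R + b%:R) / 2); nra.
Qed.

(* The [+ 1] pays for the last greedy step, which leaves no pair uncovered. *)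
Definition potential (U : nat) : R := if U == 0%N then 0 else ln U%:R + 1.

Lemma potential_ge0 U : 0 <= potential U.
Proof.
rewrite /potential; case: eqP => // U0.
have : 0 <= ln (U%:R : R) by apply: ln_ge0; rewrite ler1n; lia.
lra.
Qed.

Lemma potential_le U U' : (U' <= U)%N -> potential U' <= potential U.
Proof.
move=> le_U; rewrite {1}/potential; case: eqP => [_|U'0]; first exact: potential_ge0.
rewrite /potential; have -> : (U == 0)%N = false by apply/eqP; lia.
by rewrite lerD2r ler_ln ?posrE ?ltr0n ?ler_nat //; lia.
Qed.

Lemma potential_drop (m U U' : nat) :
  (U' + m <= U)%N -> (m%:R : R) / U%:R <= potential U - potential U'.
Proof.
move=> le_U; case: (posnP m) => [-> | m_gt0].
  by rewrite mul0r subr_ge0 potential_le //; lia.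
have U_gt0 : (0 : R) < U%:R by rewrite ltr0n; lia.
have q_le1 : (m%:R : R) / U%:R <= 1 by rewrite ler_pdivrMr // mul1r ler_nat; lia.
rewrite /potential; have -> : (U == 0)%N = false by apply/eqP; lia.
have lnU_ge0 : 0 <= ln (U%:R : R) by apply: ln_ge0; rewrite ler1n; lia.
case: eqP => U'0; first lra.
have Um_gt0 : (0 : R) < (U - m)%:R by rewrite ltr0n; lia.
have lnU' : ln (U'%:R : R) <= ln (U - m)%:R.
  by rewrite ler_ln ?posrE ?ltr0n ?ler_nat; lia.
have ln_ratio : ln ((U - m)%:R / U%:R : R) <= - ((m%:R : R) / U%:R).
  have -> : ((U - m)%:R / U%:R : R) = 1 + - ((m%:R : R) / U%:R).
    by rewrite natrB; [field; lra | lia].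
  apply: le_ln1Dx; rewrite ltrN2 ltr_pdivrMr // mul1r ltr_nat; lia.
rewrite ln_div ?posrE // in ln_ratio.
lra.
Qed.

Lemma cost_le_potential_drop (n m U U' c opt : nat) :
  (U' + m <= U)%N -> 2 * (U%:R : R) <= Num.sqrt m%:R * opt%:R ->
  (c <= 2 * minn n m)%N ->
  (c%:R : R) <= Num.sqrt n%:R * opt%:R * (potential U - potential U').
Proof.
move=> le_U U_le c_le_min.
set r := Num.sqrt (n%:R : R); set s := Num.sqrt (m%:R : R).
have r_ge0 : 0 <= r := sqrtr_ge0 _.
have s_ge0 : 0 <= s := sqrtr_ge0 _.
have ss : s * s = m%:R by rewrite -expr2 sqr_sqrtr ?ler0n.
have opt_ge0 : (0 : R) <= opt%:R by rewrite ler0n.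
have c_le : (c%:R : R) <= 2 * (r * s).
  apply: le_trans (_ : (2 * minn n m)%:R <= _); first by rewrite ler_nat.
  by rewrite natrM ler_pM2l ?ltr0n // minn_le_sqrtrM.
case: (posnP m) => [m0 | m_gt0].
  move: c_le_min; rewrite m0 minn0 leqn0 => /eqP ->.
  by rewrite !mulr_ge0 // subr_ge0 potential_le //; lia.
have drop := potential_drop le_U.
have U_pos : (0 : R) < U%:R by rewrite ltr0n; lia.
(* multiplying [2 U <= s opt] by [s / U] gives [2 s <= opt m / U] *)
have two_s_le : 2 * s <= opt%:R * (m%:R / U%:R).
  rewrite mulrA ler_pdivlMr // -ss mulrAC mulrC (mulrC opt%:R) -mulrA.
  exact: ler_wpM2l.
have : 2 * (r * s) <= r * (opt%:R * (potential U - potential U')).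
  rewrite mulrCA ler_wpM2l //; apply: le_trans two_s_le _.
  by rewrite ler_wpM2l.
lra.
Qed.

Lemma ln_ge1 (n : nat) : (4 <= n)%N -> 1 <= ln (n%:R : R).
Proof.
move=> n_ge4.
have ln2 : 1 / 2 <= ln (2 : R).
  have := @le_ln1Dx R (- (1 / 2)) ltac:(lra).
  have -> : 1 + - (1 / 2) = (2 : R)^-1 by field.
  rewrite lnV ?posrE //; lra.
apply: le_trans (_ : 1 / 2 + 1 / 2 <= _); first lra.
apply: le_trans (lerD ln2 ln2) _.
rewrite -lnM ?posrE // ler_ln ?posrE ?ltr0n ?mulr_gt0 //; last lia.
by rewrite -natrM ler_nat.
Qed.

Lemma potential_le_3ln (n U : nat) :
  (4 <= n)%N -> (U <= n * n)%N -> potential U <= 3 * ln (n%:R : R).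
Proof.
move=> n_ge4 le_U; have := ln_ge1 n_ge4.
rewrite /potential; case: eqP => [_|U0]; first lra.
have : ln (U%:R : R) <= ln (n%:R * n%:R).
  by rewrite -natrM ler_ln ?posrE ?ltr0n ?ler_nat //; lia.
rewrite lnM ?posrE ?ltr0n; [lra|lia|lia].
Qed.

End Potential.

Lemma card_bigcup_le {T I : finType} (D : I -> {set T}) :
  (#|\bigcup_i D i| <= \sum_i #|D i|)%N.
Proof.
elim/big_rec2: _ => [|i n A _ IH]; first by rewrite cards0.
by rewrite (leq_trans (leq_card_setU _ _)) // leq_add2l.
Qed.

Lemma sum_card_transpose {T T' : finType} (A : T -> {set T'}) :
  (\sum_u #|A u| = \sum_v #|[set u | v \in A u]|)%N.
Proof.
under eq_bigr => u _ do rewrite -sum1_card big_mkcond.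
rewrite exchange_big; apply: eq_bigr => v _.
by rewrite -sum1dep_card [RHS]big_mkcond.
Qed.

Lemma sum_card_setU1_if {T T' : finType} (P : pred T) (A : T -> {set T'}) (v : T') :
  (\sum_u #|if P u then v |: A u else A u| <= \sum_u #|A u| + #|[set u | P u]|)%N.
Proof.
rewrite -sum1dep_card [X in (_ + X)%N]big_mkcond -big_split leq_sum //= => u _.
case: (P u); last by rewrite addn0.
by rewrite cardsU1 addnC leq_add2l leq_b1.
Qed.

Lemma card_fst_le {T T' : finType} (C : {set T * T'}) :
  (#|[set u | [exists w, (u, w) \in C]]| <= #|C|)%N.
Proof.
apply: leq_trans (leq_imset_card fst C); apply/subset_leq_card/subsetP => u.
by rewrite inE => /existsP [w uwC]; apply/imsetP; exists (u, w).
Qed.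

Lemma card_snd_le {T T' : finType} (C : {set T * T'}) :
  (#|[set w | [exists u, (u, w) \in C]]| <= #|C|)%N.
Proof.
apply: leq_trans (leq_imset_card snd C); apply/subset_leq_card/subsetP => w.
by rewrite inE => /existsP [u uwC]; apply/imsetP; exists (u, w).
Qed.

Lemma subset_if_setU1 {T : finType} (b : bool) (v : T) (A : {set T}) :
  A \subset (if b then v |: A else A).
Proof. by case: b => //; exact: subsetUr. Qed.

Section GreedyStep.
Variables (R : realType) (V : finType) (E : rel V) (len : V -> V -> R).

Local Notation center := (center_edges E len).
Local Notation step := (hhl_step E len).

Definition uncovered_pairs (L : labeling V) : {set V * V} :=
  [set p | `[< uncovered E len L p.1 p.2 >] ].

Definition exhausted (L : labeling V) (S : {set V}) : Prop :=
  forall x, x \in S -> center L x = set0.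

Lemma covered_hhl_step (L : labeling V) v u w :
  covered E len L u w -> covered E len (step L v) u w.
Proof.
case=> x [/setIP [xLu xLw] x_sp]; exists x; split => //.
by apply/setIP; split; apply: (subsetP (subset_if_setU1 _ _ _)).
Qed.

Lemma center_edges_hhl_step (L : labeling V) v x : center (step L v) x \subset center L x.
Proof.
apply/subsetP => p; rewrite !inE => /asboolP [[reach not_cov] p_sp].
by apply/asboolP; split => //; split => // /(covered_hhl_step v); exact: not_cov.
Qed.

Lemma covered_center_edges (L : labeling V) v p :
  p \in center L v -> covered E len (step L v) p.1 p.2.
Proof.
move=> pC; have := pC; rewrite inE => /asboolP [_ v_sp].
exists v; split => //; apply/setIP; split; rewrite /hhl_step /=.
- have -> : [exists w, (p.1, w) \in center L v].
    by apply/existsP; exists p.2; rewrite -surjective_pairing.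
  exact: setU11.
- have -> : [exists u, (u, p.2) \in center L v].
    by apply/existsP; exists p.1; rewrite -surjective_pairing.
  exact: setU11.
Qed.

Lemma exhausted_hhl_step (L : labeling V) S v :
  exhausted L S -> exhausted (step L v) (v |: S).
Proof.
move=> exhS x; rewrite in_setU1 => /predU1P [-> | xS]; apply/eqP; rewrite -subset0.
- apply/subsetP => p pC; have := subsetP (center_edges_hhl_step L v v) p pC.
  by move: pC; rewrite inE => /asboolP [[_ not_cov] _] /covered_center_edges.
- by rewrite -(exhS x xS) center_edges_hhl_step.
Qed.

Lemma card_uncovered_hhl_step (L : labeling V) v :
  (#|uncovered_pairs (step L v)| + #|center L v| <= #|uncovered_pairs L|)%N.
Proof.
have center_sub : center L v \subset uncovered_pairs L.
  by apply/subsetP => p; rewrite !inE => /asboolP [? _]; apply/asboolP.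
have : uncovered_pairs (step L v) \subset uncovered_pairs L :\: center L v.
  apply/subsetP => p; rewrite inE => /asboolP [reach not_cov].
  rewrite in_setD; apply/andP; split.
  - by apply/negP => /covered_center_edges.
  - by rewrite inE; apply/asboolP; split => // /(covered_hhl_step v).
move/subset_leq_card; rewrite cardsD (setIidPr center_sub).
have := subset_leq_card center_sub; lia.
Qed.

Lemma HL_size_hhl_step (L : labeling V) v :
  (HL_size (step L v) <= HL_size L + 2 * minn #|V| #|center L v|)%N.
Proof.
have fst_le : (#|[set u | [exists w, (u, w) \in center L v]]| <= minn #|V| #|center L v|)%N.
  by rewrite leq_min max_card card_fst_le.
have snd_le : (#|[set w | [exists u, (u, w) \in center L v]]| <= minn #|V| #|center L v|)%N.
  by rewrite leq_min max_card card_snd_le.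
have fwd := sum_card_setU1_if (fun u => [exists w, (u, w) \in center L v]) L.1 v.
have bwd := sum_card_setU1_if (fun w => [exists u, (u, w) \in center L v]) L.2 v.
rewrite /HL_size !big_split /=; apply: leq_trans (leq_add fwd bwd) _.
by rewrite addnACA leq_add2l mul2n -addnn leq_add.
Qed.

Definition forward_holders (L : labeling V) v := [set u | v \in L.1 u].
Definition backward_holders (L : labeling V) v := [set w | v \in L.2 w].

Lemma HL_size_holders (L : labeling V) :
  HL_size L = (\sum_v (#|forward_holders L v| + #|backward_holders L v|))%N.
Proof. by rewrite /HL_size !big_split /= (sum_card_transpose L.1) (sum_card_transpose L.2). Qed.

(* Charge each uncovered pair to a hub [x] covering it in [Lopt]: the pairs charged
   to [x] lie in the center graph of [x] and in the product of the holders of [x]. *)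
Lemma card_uncovered_le (Lopt L : labeling V) m :
  is_HL E len Lopt -> (forall x, #|center L x| <= m)%N ->
  (#|uncovered_pairs L| <=
     \sum_x minn m (#|forward_holders Lopt x| * #|backward_holders Lopt x|))%N.
Proof.
move=> HL center_le.
set D := fun x => center L x :&: setX (forward_holders Lopt x) (backward_holders Lopt x).
have : uncovered_pairs L \subset \bigcup_x D x.
  apply/subsetP => p; rewrite inE => /asboolP [reach not_cov].
  have [x [/setIP [xf xb] x_sp]] := HL _ _ reach.
  apply/bigcupP; exists x => //; rewrite !inE xf xb !andbT.
  by apply/asboolP.
move/subset_leq_card/leq_trans; apply; apply: leq_trans (card_bigcup_le D) _.
apply: leq_sum => x _; rewrite leq_min -cardsX.
by rewrite (leq_trans (subset_leq_card (subsetIl _ _))) ?subset_leq_card ?subsetIr.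
Qed.

Lemma two_card_uncovered_le (Lopt L : labeling V) m :
  is_HL E len Lopt -> (forall x, #|center L x| <= m)%N ->
  2 * (#|uncovered_pairs L|%:R : R) <= Num.sqrt m%:R * (HL_size Lopt)%:R.
Proof.
move=> HL center_le.
set a := fun x => #|forward_holders Lopt x|; set b := fun x => #|backward_holders Lopt x|.
apply: le_trans (_ : 2 * (\sum_x minn m (a x * b x))%N%:R <= _).
  by rewrite ler_pM2l // ler_nat; exact: card_uncovered_le.
rewrite HL_size_holders !natr_sum !mulr_sumr; apply: ler_sum => x _.
exact: minn_mul_le_sqrt_addn.
Qed.

Lemma greedy_run_size_le (Lopt : labeling V) : is_HL E len Lopt ->
  forall vs L S, greedy_run E len L S vs -> exhausted L S ->
  (HL_size (foldl step L vs))%:R <=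
    (HL_size L)%:R + Num.sqrt #|V|%:R * (HL_size Lopt)%:R * potential R #|uncovered_pairs L|.
Proof.
move=> HL; elim=> [|v vs IH] L S /=.
  move=> _ _; rewrite lerDl !mulr_ge0 ?sqrtr_ge0 ?potential_ge0 //.
move=> [_ [_ [greedy run]]] exhS.
have {}IH := IH _ _ run (exhausted_hhl_step (v := v) exhS).
have center_le x : (#|center L x| <= #|center L v|)%N.
  by case: (boolP (x \in S)) => [/exhS -> | /greedy]; rewrite ?cards0.
have cost := cost_le_potential_drop (n := #|V|) (c := HL_size (step L v) - HL_size L)
  (card_uncovered_hhl_step L v) (two_card_uncovered_le HL center_le)
  ltac:(have := HL_size_hhl_step L v; lia).
have : (HL_size (step L v))%:R <= (HL_size L)%:R + (HL_size (step L v) - HL_size L)%:R :> R.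
  by rewrite -natrD ler_nat -leq_subLR.
lra.
Qed.

End GreedyStep.

Theorem mainTheorem3 :
  exists C n0 : nat,
    forall (R : realType) (V : finType) (E : rel V) (len : V -> V -> R),
      (n0 <= #|V|)%N ->
      nonneg_lengths E len -> no_zero_cycles E len ->
      forall vs : seq V,
        greedy_run E len (empty_labeling V) set0 vs ->
        forall L : labeling V, is_HL E len L ->
          ((HL_size (greedy_output E len vs))%:R : R)
            <= (C%:R : R) * Num.sqrt (#|V|%:R : R) * ln (#|V|%:R : R) * (HL_size L)%:R.
Proof.
exists 3%N, 4%N => R V E len n_ge4 _ _ vs run L HL.
have exh0 : exhausted E len (empty_labeling V) set0 by move=> x; rewrite inE.
have := greedy_run_size_le HL run exh0.
have -> : HL_size (empty_labeling V) = 0%N.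
  by rewrite /HL_size big1 // => v _; rewrite /= cards0.
rewrite add0r => /le_trans; apply.
have U_le : (#|uncovered_pairs E len (empty_labeling V)| <= #|V| * #|V|)%N.
  by rewrite -card_prod max_card.
have -> : 3%:R * Num.sqrt #|V|%:R * ln #|V|%:R * (HL_size L)%:R
          = Num.sqrt #|V|%:R * (HL_size L)%:R * (3 * ln #|V|%:R) :> R by ring.
by rewrite ler_wpM2l ?mulr_ge0 ?sqrtr_ge0 // potential_le_3ln.
Qed.
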